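(* For any partition $\lambda$ with 2-core $\bar\lambda$, the ratio $H_{\mathrm{odd}}(\lambda)/H(\bar\lambda)$ is an integer.
   Context: For a partition $\lambda$, the hook length of a box of its Young diagram is the number of boxes to its right in its row plus the number below it in its column plus one; $H(\lambda)$ is the product of all hook lengths and $H_{\mathrm{odd}}(\lambda)$ the product of the odd hook lengths. The 2-core $\bar\lambda$ is the partition obtained from $\lambda$ by repeatedly removing dominoes ($1\times2$ or $2\times1$ rectangles of boxes) from the Young diagram, such that a Young diagram remains after each removal, until no more removal is possible; it is independent of the choices made. *)

From mathcomp Require Import all_boot.
Set Implicit Arguments. Unset Strict Implicit. Unset Printing Implicit Defensive.

(* Rows are indexed from 0; the box
   (i, j) (row i, column j) belongs to the Young diagram iff j < lambda_i. *)
Definition is_partition (la : seq nat) : bool :=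
  sorted geq la && all (fun x => 0 < x) la.

Definition part (la : seq nat) (i : nat) : nat := nth 0 la i.

Definition conj_part (la : seq nat) (j : nat) : nat := count (fun x => j < x) la.

(* hook length of box (i, j): arm + leg + 1 *)
Definition hook (la : seq nat) (i j : nat) : nat :=
  (part la i - j.+1) + (conj_part la j - i.+1) + 1.

Definition hook_prod (la : seq nat) : nat :=
  \prod_(i < size la) \prod_(j < part la i) hook la i j.

Definition odd_hook_prod (la : seq nat) : nat :=
  \prod_(i < size la) \prod_(j < part la i | odd (hook la i j)) hook la i j.

(* rm_domino la mu: mu is a partition whose Young diagram is obtained from
   that of la by removing a domino (a horizontal 1x2 domino in row i, or a
   vertical 2x1 domino in rows i, i+1 of a common column). *)
Definition rm_domino (la mu : seq nat) : Prop :=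
  is_partition mu /\
  ((exists i, part la i = (part mu i).+2 /\
              forall k, k != i -> part la k = part mu k) \/
   (exists i, part la i = (part mu i).+1 /\
              part la i.+1 = (part mu i.+1).+1 /\
              part mu i = part mu i.+1 /\
              forall k, k != i -> k != i.+1 -> part la k = part mu k)).

Inductive rm_dominoes : seq nat -> seq nat -> Prop :=
| rm_dominoes_refl la : rm_dominoes la la
| rm_dominoes_step la mu nu :
    rm_domino la mu -> rm_dominoes mu nu -> rm_dominoes la nu.

(* mu is the 2-core of la: obtained by repeated domino removals until no
   further removal is possible (independent of the choices made). *)
Definition two_core (la mu : seq nat) : Prop :=
  rm_dominoes la mu /\ ~ (exists nu, rm_domino mu nu).

From mathcomp Require Import all_boot all_order all_algebra zify.
From mathcomp Require Import fingroup perm.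
Set Implicit Arguments. Unset Strict Implicit. Unset Printing Implicit Defensive.
Import Order.TTheory GRing.Theory Num.Theory.

(* Encode a partition by its beta-set B = {la_i + N - 1 - i}: the hooks are
   the gaps x - y with x in B, y not in B and y < x.  Hence for an odd prime p
   the p-adic valuation of H_odd is a sum over k of the numbers of odd gaps
   divisible by M = p^(k+1).  Cutting the integers into the M runners
   r + kM (M odd), such a gap becomes an odd-distance inversion on one runner,
   and a runner with parity excess e (even minus odd beads) carries at least
   e(e-1)/2 of them, with equality when the runner is closed under k+2 -> k.
   Removing a domino moves one bead down by 2, so it preserves the alternating
   bead count, which fixes the sum of the runner charges.  The beta-set of the
   2-core is an initial segment of evens and of odds: all its hooks are odd
   and its charges are balanced, so by convexity its counts are minimal. *)

Lemma big_ord_mul_residues (R : Type) (idx : R) (op : Monoid.com_law idx)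
    (K M : nat) (h : nat -> R) :
  \big[op/idx]_(z < K * M) h z = \big[op/idx]_(r < M) \big[op/idx]_(k < K) h (r + k * M).
Proof.
elim: K => [|K IH].
  by rewrite mul0n big_ord0 big1 // => r _; rewrite big_ord0.
rewrite (eq_bigr (fun r : 'I_M => op (\big[op/idx]_(k < K) h (r + k * M)) (h (r + K * M))));
  last by move=> r _; rewrite big_ord_recr.
rewrite big_split /= -IH mulSnr.
rewrite -!(big_mkord xpredT) (big_cat_nat _ (leq_addr M (K * M))) //=.
congr (op _ _).
rewrite -{1}(add0n (K * M)) big_addn addKn big_mkord.
by apply: eq_bigr => i _.
Qed.

Lemma sum_ord_widen_indicator n1 n2 (F : nat -> nat) : n1 <= n2 ->
  \sum_(i < n1) F i = \sum_(i < n2) (i < n1) * F i.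
Proof.
move=> le; rewrite (big_ord_widen n2 F le) big_mkcond /=.
by apply: eq_bigr => i _; case: (i < n1); rewrite ?mul1n ?mul0n.
Qed.

Lemma sum_ord_indicator_le n m (F : nat -> nat) :
  \sum_(i < n) (i < m) * F i <= \sum_(i < m) F i.
Proof.
case: (leqP m n) => h; first by rewrite (sum_ord_widen_indicator _ h).
rewrite (eq_bigr (fun i : 'I_n => F i)); last first.
  by move=> i _; rewrite (ltn_trans (ltn_ord i) h) mul1n.
rewrite (sum_ord_widen_indicator F (ltnW h)); apply: leq_sum => i _.
by case: (i < n); rewrite ?mul1n ?mul0n.
Qed.

Lemma sum_ord_odd K : \sum_(k < K) odd k = K./2.
Proof.
elim: K => [|K IH]; first by rewrite big_ord0.
by rewrite big_ord_recr /= IH addnC -uphalf_half.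
Qed.

Lemma sum_ord_even K : \sum_(k < K) ~~ odd k = uphalf K.
Proof.
elim: K => [|K IH]; first by rewrite big_ord0.
by rewrite big_ord_recr /= IH uphalf_half; case: (odd K); rewrite /= ?addn0 ?addn1 ?add0n ?add1n.
Qed.

Lemma count_ord_same_parity z : \sum_(z' < z) (odd z' == odd z) = z./2.
Proof.
case oz: (odd z); first by rewrite -sum_ord_odd; apply: eq_bigr => i _; case: (odd i).
rewrite (eq_bigr (fun i : 'I_z => nat_of_bool (~~ odd i))); last by move=> i _; case: (odd i).
by rewrite sum_ord_even uphalf_half oz.
Qed.

Lemma count_ord_mod D t m : t < D -> \sum_(z < m) (z %% D == t) = m %/ D + (t < m %% D).
Proof.
move=> tD; have D0 : 0 < D by case: D tD.
elim: m => [|m IH]; first by rewrite big_ord0 div0n mod0n.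
rewrite big_ord_recr /= IH divnS // modnS.
have mlt := ltn_pmod m D0.
case: ifP => dv.
- have e : (m %% D).+1 = D.
    apply/eqP; rewrite eqn_leq mlt /=.
    apply: dvdn_leq => //; move: dv; rewrite {1}(divn_eq m D) -addnS.
    by rewrite dvdn_addr ?dvdn_mull ?dvdnn.
  have -> : m %% D = D.-1 by lia.
  case: (ltngtP t D.-1) => h; rewrite ?ltn0 /=; lia.
- case: (ltngtP t (m %% D)) => h; rewrite ?ltn0 /=; lia.
Qed.

Definition sub2_closed (w : nat -> bool) := forall k, w k.+2 -> w k.

Section Sub2Closed.
Variable w : nat -> bool.
Hypothesis w_closed : sub2_closed w.

Lemma sub2_closed_double n k : w (k + n.*2) -> w k.
Proof. by elim: n k => [|n IH] k; rewrite ?addn0 // doubleS !addnS => /w_closed /IH. Qed.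

Lemma sub2_closed_le K k : w K -> k <= K -> odd k = odd K -> w k.
Proof.
move=> wK kK oK; apply: (@sub2_closed_double (K - k)./2).
have := odd_double_half (K - k); rewrite oddB // oK addbb add0n => ->.
by rewrite subnKC.
Qed.

Lemma sub2_closed_odd_gap x y : w x -> ~~ w y -> y < x -> odd (x - y).
Proof.
move=> wx nwy yx; apply/negPn/negP => ev; move/negP: nwy; apply.
apply: (sub2_closed_le wx (ltnW yx)).
by move: ev; rewrite oddB ?(ltnW yx) //; case: (odd x); case: (odd y).
Qed.

End Sub2Closed.

Definition odd_inversions (w : nat -> bool) (K : nat) : nat :=
  \sum_(k < K) \sum_(k' < k) (w k && ~~ w k' && odd (k - k')).
Definition even_count (w : nat -> bool) (K : nat) : nat := \sum_(k < K) (w k && ~~ odd k).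
Definition odd_count (w : nat -> bool) (K : nat) : nat := \sum_(k < K) (w k && odd k).

Section ParityExcess.
Variable w : nat -> bool.

Lemma odd_inversionsS K :
  odd_inversions w K.+1
  = odd_inversions w K + w K * \sum_(k' < K) (~~ w k' && odd (K - k')).
Proof.
rewrite /odd_inversions big_ord_recr /=; congr (_ + _).
by rewrite big_distrr /=; apply: eq_bigr => k _; case: (w K); rewrite ?mul1n ?mul0n.
Qed.

Lemma even_countS K : even_count w K.+1 = even_count w K + (w K && ~~ odd K).
Proof. by rewrite /even_count big_ord_recr. Qed.

Lemma odd_countS K : odd_count w K.+1 = odd_count w K + (w K && odd K).
Proof. by rewrite /odd_count big_ord_recr. Qed.

Lemma even_count_le K : even_count w K <= uphalf K.
Proof. by rewrite -sum_ord_even; apply: leq_sum => k _; case: (w k). Qed.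

Lemma odd_count_le K : odd_count w K <= K./2.
Proof. by rewrite -sum_ord_odd; apply: leq_sum => k _; case: (w k). Qed.

(* The positions below K at odd distance from K are the holes at odd
   distance plus the beads of the parity opposite to K. *)
Lemma count_odd_distance K :
  \sum_(k' < K) (~~ w k' && odd (K - k')) + (if odd K then even_count w K else odd_count w K)
  = (if odd K then uphalf K else K./2).
Proof.
have -> : (if odd K then even_count w K else odd_count w K)
          = \sum_(k' < K) (w k' && odd (K - k')).
  by rewrite /even_count /odd_count; case: ifP => oK; apply: eq_bigr => k _;
     rewrite oddB ?(ltnW (ltn_ord k)) // oK.
have -> : (if odd K then uphalf K else K./2) = \sum_(k' < K) odd (K - k').
  by rewrite -sum_ord_even -sum_ord_odd; case: ifP => oK; apply: eq_bigr => k _;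
     rewrite oddB ?(ltnW (ltn_ord k)) // oK.
by rewrite -big_split /=; apply: eq_bigr => k _; case: (w k); case: (odd _).
Qed.

Local Open Scope ring_scope.

Definition parity_excess K : int := (even_count w K)%:Z - (odd_count w K)%:Z.

Lemma parity_excess_bound K :
  parity_excess K * (parity_excess K - 1) <= (2 * odd_inversions w K)%:Z.
Proof.
rewrite /parity_excess; elim: K => [|K IH].
  by rewrite /even_count /odd_count /odd_inversions !big_ord0.
have HS := count_odd_distance K.
have HE := even_count_le K; have HO := odd_count_le K.
have U := uphalf_half K; have D := odd_double_half K.
rewrite odd_inversionsS even_countS odd_countS.
move: HS IH; set S := \sum_(k' < K) _ => HS IH.
case: (w K); case oK: (odd K) => /=; move: HS HE HO U D; rewrite oK /=; nia.
Qed.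

Hypothesis w_closed : sub2_closed w.

Lemma parity_excess_sub2_closed K :
  parity_excess K * (parity_excess K - 1) = (2 * odd_inversions w K)%:Z.
Proof.
rewrite /parity_excess; elim: K => [|K IH].
  by rewrite /even_count /odd_count /odd_inversions !big_ord0.
have HS := count_odd_distance K.
have U := uphalf_half K; have D := odd_double_half K.
rewrite odd_inversionsS even_countS odd_countS.
move: HS IH; set S := \sum_(k' < K) _ => HS IH.
case wK: (w K) => /=; last by move: IH; rewrite !addn0; nia.
have below k : (k < K)%N -> odd k = odd K -> w k.
  by move=> kK ok; apply: (sub2_closed_le w_closed wK (ltnW kK)).
case oK: (odd K) => /=; move: HS U D; rewrite oK /=.
- have HO : odd_count w K = K./2.
    rewrite -sum_ord_odd /odd_count; apply: eq_bigr => k _.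
    by case ok: (odd k); rewrite ?andbF // andbT below // ok oK.
  move=> HS U D; nia.
- have HE : even_count w K = uphalf K.
    rewrite -sum_ord_even /even_count; apply: eq_bigr => k _.
    by case ok: (odd k); rewrite ?andbF // andbT below // ok oK.
  move=> HS U D; nia.
Qed.

End ParityExcess.

Definition runner (b : nat -> bool) (M r k : nat) : bool := b (r + k * M).

Lemma sub2_closed_runner b M r : sub2_closed b -> sub2_closed (runner b M r).
Proof.
move=> b_closed k; rewrite /runner => h; apply: (sub2_closed_double (n := M) b_closed).
by have -> : r + k * M + M.*2 = r + k.+2 * M by rewrite -addnn !mulSnr; lia.
Qed.

Definition odd_gap_count (b : nat -> bool) (n M : nat) : nat :=
  \sum_(x < n) \sum_(y < x) (b x && ~~ b y && odd (x - y) && (M %| x - y)).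

Lemma odd_gap_count_widen b L n M : (forall z, L <= z -> b z = false) -> L <= n ->
  odd_gap_count b n M = odd_gap_count b L M.
Proof.
move=> b_fin Ln; rewrite /odd_gap_count.
rewrite (sum_ord_widen_indicator
  (fun x => \sum_(y < x) (b x && ~~ b y && odd (x - y) && (M %| x - y))) Ln).
apply: eq_bigr => x _; case: (ltnP x L) => /= h; first by rewrite mul1n.
by rewrite mul0n big1 // => y _; rewrite b_fin.
Qed.

(* For odd M, a gap x - y divisible by M lies inside one runner, where it
   is (k - k') * M and has the parity of k - k'. *)
Lemma odd_gap_count_row b K M r k : odd M -> r < M -> k < K ->
  \sum_(y < r + k * M) (b (r + k * M) && ~~ b y && odd (r + k * M - y) && (M %| r + k * M - y))
  = \sum_(k' < k) (runner b M r k && ~~ runner b M r k' && odd (k - k')).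
Proof.
move=> oM rM kK; have M0 : 0 < M by case: M oM rM.
rewrite /runner; set x := r + k * M.
set G := fun y => b x && ~~ b y && odd (x - y) && (M %| x - y).
have xKM : x <= K * M.
  apply: leq_trans (_ : M + k * M <= _); first by rewrite leq_add2r ltnW.
  by rewrite -mulSn leq_mul2r kK orbT.
rewrite (sum_ord_widen_indicator G xKM) (big_ord_mul_residues _ _ _ (fun y => (y < x) * G y)).
rewrite (bigD1 (Ordinal rM)) //= [X in _ + X]big1 ?addn0; last first.
  move=> r' /eqP ner; apply: big1 => k' _.
  case lt: (r' + k' * M < x); rewrite ?mul0n // mul1n /G /x in lt *.
  case dv: (M %| _); rewrite ?andbF //; exfalso; apply: ner.
  move: dv; rewrite -eqn_mod_dvd ?(ltnW lt) // !(addnC _ (_ * M)) !modnMDl => /eqP.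
  by rewrite !modn_small // => e; apply: val_inj.
rewrite (sum_ord_widen_indicator (fun k' => b x && ~~ b (r + k' * M) && odd (k - k')) (ltnW kK)).
apply: eq_bigr => k' _; rewrite ltn_add2l ltn_mul2r M0 /G /x.
case: (k' < k); rewrite ?mul0n ?mul1n //.
by rewrite subnDl -mulnBl dvdn_mull ?dvdnn // andbT oddM oM andbT.
Qed.

Lemma odd_gap_count_runners b K M : odd M ->
  odd_gap_count b (K * M) M = \sum_(r < M) odd_inversions (runner b M r) K.
Proof.
move=> oM; rewrite /odd_gap_count (big_ord_mul_residues _ _ _
  (fun x => \sum_(y < x) (b x && ~~ b y && odd (x - y) && (M %| x - y)))).
apply: eq_bigr => r _; apply: eq_bigr => k _.
exact: odd_gap_count_row.
Qed.

Local Open Scope ring_scope.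

Definition alt_sign (z : nat) : int := if odd z then -1 else 1.

Definition signed_count (b : nat -> bool) (n : nat) : int :=
  \sum_(z < n) (if b z then alt_sign z else 0).

Lemma parity_excessE w K : parity_excess w K = signed_count w K.
Proof.
rewrite /parity_excess /signed_count; elim: K => [|K IH].
  by rewrite /even_count /odd_count !big_ord0.
rewrite even_countS odd_countS big_ord_recr /= -[\sum_(i < K) _]IH /alt_sign.
by case: (w K); case: (odd K) => /=; rewrite ?addn0 ?addn1 ?addr0; lia.
Qed.

Lemma signed_count_widen b L n : (forall z, (L <= z)%N -> b z = false) -> (L <= n)%N ->
  signed_count b n = signed_count b L.
Proof.
move=> b_fin Ln; rewrite /signed_count.
rewrite (big_ord_widen n (fun z => if b z then alt_sign z else 0) Ln) [RHS]big_mkcond /=.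
by apply: eq_bigr => z _; case: (ltnP z L) => // h; rewrite b_fin.
Qed.

Lemma signed_count_runners b K M : odd M ->
  \sum_(r < M) alt_sign r * parity_excess (runner b M r) K = signed_count b (K * M).
Proof.
move=> oM; rewrite /signed_count.
rewrite (big_ord_mul_residues _ _ _ (fun z => if b z then alt_sign z else 0)).
apply: eq_bigr => r _; rewrite parity_excessE mulr_sumr; apply: eq_bigr => k _.
rewrite /runner /alt_sign oddD oddM oM andbT.
by case: (b _); case: (odd r); case: (odd k); rewrite /= ?mulr0 ?mulN1r ?mul1r ?opprK.
Qed.

(* Since [u (u - 1) = e (e - 1)] for [u = 1 - e], flipping the excess on odd
   runners keeps the quadratic terms and makes the sum of the charges an
   affine function of [signed_count]. *)
Definition charge (b : nat -> bool) (K M r : nat) : int :=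
  if odd r then 1 - parity_excess (runner b M r) K else parity_excess (runner b M r) K.

Lemma sum_charge b K M : odd M ->
  \sum_(r < M) charge b K M r = \sum_(r < M) (odd r)%:Z + signed_count b (K * M).
Proof.
move=> oM; rewrite -signed_count_runners // -big_split /=; apply: eq_bigr => r _.
by rewrite /charge /alt_sign; case: (odd r) => /=; lia.
Qed.

Lemma sum_quad_le_of_balanced M (u v : nat -> int) : (0 < M)%N ->
  \sum_(r < M) u r = \sum_(r < M) v r ->
  (forall r s, (r < M)%N -> (s < M)%N -> v r <= v s + 1) ->
  \sum_(r < M) v r * (v r - 1) <= \sum_(r < M) u r * (u r - 1).
Proof.
move=> M0 Suv v_bal.
have [c v_c] : exists c, forall r, (r < M)%N -> v r = c \/ v r = c + 1.
  case: (boolP [exists r : 'I_M, v r < v 0%N]) => [/existsP [r0 Hr0]|/existsPn Hn].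
  - exists (v 0%N - 1) => r rM.
    by have := v_bal 0%N r M0 rM; have := v_bal r r0 rM (ltn_ord r0); lia.
  - exists (v 0%N) => r rM.
    by have := v_bal r 0%N rM M0; have := Hn (Ordinal rM); rewrite /= -leNgt; lia.
(* Shift by [c]: [v - c] only takes the values 0 and 1, where the integer
   function [t (t - 1) >= 0] vanishes. *)
have shift (w : nat -> int) : \sum_(r < M) w r * (w r - 1)
    = \sum_(r < M) (w r - c) * (w r - c - 1) + 2 * c * \sum_(r < M) w r
      - \sum_(r < M) c * (c + 1).
  by rewrite mulr_sumr -big_split -sumrB /=; apply: eq_bigr => r _; lia.
have v0 : \sum_(r < M) (v r - c) * (v r - c - 1) = 0.
  by apply: big1 => r _; case: (v_c r (ltn_ord r)) => ->; lia.
have u0 : 0 <= \sum_(r < M) (u r - c) * (u r - c - 1).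
  apply: sumr_ge0 => r _.
  by case: (lerP (u r) c) => h; [apply: mulr_le0 | apply: mulr_ge0]; lia.
by rewrite !shift Suv v0; lia.
Qed.

Lemma odd_gap_count_le_of_balanced (bX bY : nat -> bool) K M : odd M ->
  signed_count bX (K * M) = signed_count bY (K * M) -> sub2_closed bY ->
  (forall r s, (r < M)%N -> (s < M)%N -> charge bY K M r <= charge bY K M s + 1) ->
  (odd_gap_count bY (K * M) M <= odd_gap_count bX (K * M) M)%N.
Proof.
move=> oM sXY bY_closed bY_bal.
have M0 : (0 < M)%N by case: M oM {sXY bY_bal}.
rewrite -(leq_pmul2l (isT : 0 < 2)%N) -lez_nat !odd_gap_count_runners // !big_distrr /=.
rewrite !(big_morph Posz PoszD (erefl 0%:Z)).
apply: le_trans (_ : \sum_(r < M) charge bX K M r * (charge bX K M r - 1) <= _).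
  rewrite (eq_bigr (fun r : 'I_M => charge bY K M r * (charge bY K M r - 1))); last first.
    move=> r _; rewrite -parity_excess_sub2_closed; last exact: sub2_closed_runner.
    by rewrite /charge; case: (odd r); lia.
  by apply: sum_quad_le_of_balanced => //; rewrite !sum_charge // sXY.
apply: ler_sum => r _.
by have := parity_excess_bound (runner bX M r) K; rewrite /charge; case: (odd r); lia.
Qed.

Local Close Scope ring_scope.

Definition parity_count (b : nat -> bool) (L : nat) (par : bool) : nat :=
  \sum_(z < L) (b z && (odd z == par)).

Lemma sub2_closedP (b : nat -> bool) L : sub2_closed b -> (forall z, L <= z -> b z = false) ->
  forall z, b z = (z < (parity_count b L (odd z)).*2).
Proof.
move=> b_closed b_fin z; have D := odd_double_half z.
case bz: (b z).
- have zL : z < L by case: (leqP L z) => // /b_fin; rewrite bz.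
  suff : z./2.+1 <= parity_count b L (odd z) by move=> h; apply/esym; lia.
  have -> : z./2.+1 = \sum_(z' < z.+1) (odd z' == odd z).
    by rewrite big_ord_recr /= count_ord_same_parity eqxx addn1.
  rewrite /parity_count (sum_ord_widen_indicator (fun z' => nat_of_bool (odd z' == odd z)) zL).
  apply: leq_sum => i _; case: (ltnP i z.+1) => iz; rewrite ?mul0n ?mul1n //.
  by case e: (odd i == odd z); rewrite // (sub2_closed_le b_closed bz) //; apply/eqP.
- suff : parity_count b L (odd z) <= z./2 by move=> h; apply/esym; lia.
  rewrite -count_ord_same_parity.
  apply: leq_trans (sum_ord_indicator_le L z (fun i => nat_of_bool (odd i == odd z))).
  apply: leq_sum => i _; case e: (odd i == odd z); rewrite ?andbF ?muln0 //.
  case: (ltnP i z) => iz; rewrite ?mul1n /=; first by case: (b i).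
  by case bi: (b i) => //; move: bz; rewrite (sub2_closed_le b_closed bi) // (eqP e).
Qed.

Definition even_lift (M r : nat) : nat := if odd r then r + M else r.
Definition odd_lift (M r : nat) : nat := if odd r then r else r + M.

(* Chinese remaindering for the coprime moduli M and 2. *)
Lemma mod_double_odd M r z : odd M -> r < M ->
  ((z %% M == r) && ~~ odd z = (z %% M.*2 == even_lift M r)) /\
  ((z %% M == r) && odd z = (z %% M.*2 == odd_lift M r)).
Proof.
move=> oM rM; have M0 : 0 < M by case: M oM rM.
have -> : z %% M = z %% M.*2 %% M by rewrite modn_dvdm // -muln2 dvdn_mulr.
have -> : odd z = odd (z %% M.*2) by rewrite odd_mod // odd_double.
have : z %% M.*2 < M.*2 by rewrite ltn_pmod // double_gt0.
rewrite /even_lift /odd_lift; move: (z %% M.*2) => s sM2.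
case: (ltnP s M) => sM.
- rewrite (modn_small sM).
  case: (eqVneq s r) => [->|ne]; case or: (odd r) => /=; split => //; apply/esym/eqP; lia.
- have -> : s = (s - M) + M by rewrite subnK.
  have sM' : s - M < M by lia.
  rewrite modnDr (modn_small sM') oddD oM.
  case: (eqVneq (s - M) r) => [<-|ne].
  + by case: (odd (s - M)) => /=; split => //; apply/esym/eqP; lia.
  + by case: (odd r) => /=; split; rewrite ?andbF //; apply/esym/eqP; lia.
Qed.

Local Open Scope ring_scope.

Lemma sum_runner (f : nat -> int) K M r : (r < M)%N ->
  \sum_(k < K) f (r + k * M)%N = \sum_(z < K * M) (if (z %% M)%N == r then f z else 0).
Proof.
move=> rM; rewrite (big_ord_mul_residues _ _ _ (fun z => if (z %% M)%N == r then f z else 0)).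
rewrite (bigD1 (Ordinal rM)) //= [X in _ + X]big1 ?addr0; last first.
  move=> r' /eqP ne; apply: big1 => k _.
  rewrite addnC modnMDl modn_small //; case: eqP => // e; exfalso; apply: ne.
  exact: val_inj.
by apply: eq_bigr => k _; rewrite addnC modnMDl modn_small // eqxx.
Qed.

Lemma chargeE b K M r : odd M -> (r < M)%N ->
  charge b K M r
  = (odd r)%:Z + \sum_(k < K) (if b (r + k * M)%N then alt_sign (r + k * M) else 0).
Proof.
move=> oM rM; rewrite /charge parity_excessE /signed_count /runner.
case or: (odd r); last first.
  by rewrite add0r; apply: eq_bigr => k _; rewrite /alt_sign oddD oddM oM or andbT.
rewrite -sumrN; congr (_ + _); apply: eq_bigr => k _.
rewrite /alt_sign oddD oddM oM or andbT.
by case: (b _); case: (odd k) => /=; rewrite ?oppr0 ?opprK.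
Qed.

Section CoreCharge.
Variables (b : nat -> bool) (L : nat).
Hypotheses (b_closed : sub2_closed b) (b_fin : forall z, (L <= z)%N -> b z = false).

Let E := (parity_count b L false).*2.
Let O := (parity_count b L true).*2.

(* The beads of [b] fill the even and odd numbers below [E] and [O]; along
   runner [r] these are residue classes modulo [2 M], counted by division. *)
Lemma charge_sub2_closed K M r : odd M -> (r < M)%N -> (L.*2 <= K * M)%N ->
  charge b K M r = (odd r)%:Z + (E %/ M.*2 + (even_lift M r < E %% M.*2))%N%:Z
                              - (O %/ M.*2 + (odd_lift M r < O %% M.*2))%N%:Z.
Proof.
move=> oM rM LK.
rewrite chargeE // (sum_runner (fun z => if b z then alt_sign z else 0)) // -addrA.
congr (_ + _).
have count_le par : ((parity_count b L par).*2 <= K * M)%N.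
  apply: leq_trans LK; rewrite leq_double /parity_count.
  apply: (leq_trans (_ : _ <= \sum_(z < L) 1)%N); last by rewrite sum1_card card_ord.
  by apply: leq_sum => i _; apply: leq_b1.
have eM : (even_lift M r < M.*2)%N by rewrite /even_lift; case: (odd r); lia.
have oM2 : (odd_lift M r < M.*2)%N by rewrite /odd_lift; case: (odd r); lia.
rewrite -!count_ord_mod // /E /O.
rewrite (sum_ord_widen_indicator (fun z => nat_of_bool ((z %% M.*2)%N == even_lift M r))
          (count_le false)).
rewrite (sum_ord_widen_indicator (fun z => nat_of_bool ((z %% M.*2)%N == odd_lift M r))
          (count_le true)).
rewrite !(big_morph Posz PoszD (erefl 0%:Z)) -sumrB; apply: eq_bigr => z _.
have [<- <-] := mod_double_odd z oM rM.
rewrite (sub2_closedP b_closed b_fin z).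
case: eqP => _; case oz: (odd z); rewrite /alt_sign ?oz /=;
  case: ltnP => _; case: ltnP => _; rewrite /= ?muln0 ?muln1 ?mul0n ?mul1n; lia.
Qed.

Lemma charge_balanced K M : odd M -> (L.*2 <= K * M)%N ->
  forall r s, (r < M)%N -> (s < M)%N -> charge b K M r <= charge b K M s + 1.
Proof.
move=> oM LK r s rM sM; rewrite !charge_sub2_closed //.
have M20 : (0 < M.*2)%N by rewrite double_gt0; case: M oM {LK rM sM}.
have := ltn_pmod E M20; have := ltn_pmod O M20.
move: (E %% M.*2)%N (O %% M.*2)%N (E %/ M.*2)%N (O %/ M.*2)%N => e o P Q oB eB.
by rewrite /even_lift /odd_lift; case: (odd r); case: (odd s); do 4 (case: ltnP => ?); lia.
Qed.

End CoreCharge.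

Local Close Scope ring_scope.

Lemma odd_gap_count_sub2_closed_le (bX bY : nat -> bool) L M n : odd M -> sub2_closed bY ->
  (forall z, L <= z -> bX z = false) -> (forall z, L <= z -> bY z = false) ->
  signed_count bX L = signed_count bY L -> L <= n ->
  odd_gap_count bY n M <= odd_gap_count bX n M.
Proof.
move=> oM bY_closed bX_fin bY_fin sXY Ln.
have M0 : 0 < M by case: M oM.
have LK : L <= L.*2 * M by rewrite -{1}[L]muln1 -addnn leq_mul ?leq_addr.
rewrite (odd_gap_count_widen M bX_fin Ln) (odd_gap_count_widen M bY_fin Ln).
rewrite -(odd_gap_count_widen M bX_fin LK) -(odd_gap_count_widen M bY_fin LK).
apply: odd_gap_count_le_of_balanced => //.
  by rewrite (signed_count_widen bX_fin LK) (signed_count_widen bY_fin LK).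
by apply: (charge_balanced (L := L)); rewrite // leq_pmulr.
Qed.

Lemma part_default la i : size la <= i -> part la i = 0.
Proof. by move=> h; rewrite /part nth_default. Qed.

Lemma part_pos la i : is_partition la -> i < size la -> 0 < part la i.
Proof. by case/andP=> _ /all_nthP la_pos il; apply: la_pos. Qed.

Lemma part_nonincr la i k : sorted geq la -> i <= k -> part la k <= part la i.
Proof.
move=> la_sorted ik; rewrite /part.
case: (ltnP k (size la)) => kl; last by rewrite nth_default.
have le_nth := sorted_leq_nth (rev_trans leq_trans) (fun x => leqnn x) 0 la_sorted.
exact: le_nth (leq_ltn_trans ik kl) kl ik.
Qed.

Lemma part_le_head a s k : sorted geq (a :: s) -> part s k <= a.
Proof. by move=> S; have := part_nonincr S (leq0n k.+1). Qed.

Lemma conj_part_gt la i j : sorted geq la -> j < part la i -> i < conj_part la j.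
Proof.
elim: la i => [|a s IH] [|i] S; rewrite /conj_part /part //= ?nth_nil //; first by move=> ->.
move=> h; have := IH i (path_sorted S) h; rewrite /conj_part.
by rewrite (leq_trans h (part_le_head i S)) add1n.
Qed.

Lemma conj_part_le la i j : sorted geq la -> part la i <= j -> conj_part la j <= i.
Proof.
elim: la i => [|a s IH] [|i] S; rewrite /conj_part /part //= => h.
- rewrite ltnNge h /=.
  by have := IH 0 (path_sorted S) (leq_trans (part_le_head 0 S) h).
- by have := IH i (path_sorted S) h; rewrite /conj_part; case: (j < a) => /=; lia.
Qed.

Lemma conj_part_nonincr la j j' : j <= j' -> conj_part la j' <= conj_part la j.
Proof. by move=> jj; apply: sub_count => x /=; apply: leq_ltn_trans jj. Qed.

(* Beta-numbers of [la] padded to [N] rows; the hooks of [la] are the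
   differences [beta i - cobeta j] between a beta-number and a smaller
   non-beta-number. *)
Definition beta (la : seq nat) (N i : nat) : nat := part la i + (N - i.+1).
Definition cobeta (la : seq nat) (N j : nat) : nat := N + j - conj_part la j.
Definition beta_set (la : seq nat) (N z : nat) : bool := z \in [seq beta la N i | i <- iota 0 N].
Definition beta_bound (la : seq nat) (N : nat) : nat := N + part la 0.

Lemma beta_setP la N z : reflect (exists2 i, i < N & beta la N i = z) (beta_set la N z).
Proof.
apply: (iffP mapP) => [[i]|[i iN <-]]; last by exists i; rewrite ?mem_iota.
by rewrite mem_iota add0n /= => iN ->; exists i.
Qed.

Section BetaNumbers.
Variables (la : seq nat) (N : nat).
Hypotheses (la_sorted : sorted geq la) (la_N : size la <= N).

Lemma conj_part_le_N j : conj_part la j <= N.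
Proof. exact: leq_trans (count_size _ la) la_N. Qed.

Lemma beta_lt i k : i < k -> k < N -> beta la N k < beta la N i.
Proof. by move=> ik kN; have := part_nonincr la_sorted (ltnW ik); rewrite /beta; lia. Qed.

Lemma cobeta_lt j j' : j < j' -> cobeta la N j < cobeta la N j'.
Proof.
move=> jj; have := conj_part_nonincr la (ltnW jj).
by have := conj_part_le_N j; have := conj_part_le_N j'; rewrite /cobeta; lia.
Qed.

Lemma cobeta_lt_beta i j : i < N -> (cobeta la N j < beta la N i) = (j < part la i).
Proof.
move=> iN; have := conj_part_le_N j; rewrite /cobeta /beta.
case: (ltnP j (part la i)) => h.
- by have := conj_part_gt la_sorted h; lia.
- by have := conj_part_le la_sorted h; lia.
Qed.

Lemma cobeta_neq_beta i j : i < N -> cobeta la N j != beta la N i.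
Proof.
move=> iN; have := conj_part_le_N j; rewrite /cobeta /beta.
case: (ltnP j (part la i)) => h.
- by have := conj_part_gt la_sorted h; lia.
- by have := conj_part_le la_sorted h; lia.
Qed.

Lemma cobeta_not_beta j : ~~ beta_set la N (cobeta la N j).
Proof. by apply/beta_setP => -[i iN e]; move: (cobeta_neq_beta j iN); rewrite e eqxx. Qed.

Lemma beta_lt_bound i : i < N -> beta la N i < beta_bound la N.
Proof.
by move=> iN; have := part_nonincr la_sorted (leq0n i); rewrite /beta /beta_bound; lia.
Qed.

Lemma beta_set_lt_bound z : beta_set la N z -> z < beta_bound la N.
Proof. by case/beta_setP=> i iN <-; apply: beta_lt_bound. Qed.

Lemma beta_set_ge_bound z : beta_bound la N <= z -> beta_set la N z = false.
Proof. by move=> Lz; apply/negP => /beta_set_lt_bound; rewrite ltnNge Lz. Qed.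

Lemma uniq_beta_seq : uniq [seq beta la N i | i <- iota 0 N].
Proof.
rewrite map_inj_in_uniq ?iota_uniq // => i k; rewrite !mem_iota !add0n /= => iN kN e.
by case: (ltngtP i k) => // h; [have := beta_lt h kN | have := beta_lt h iN]; rewrite e ltnn.
Qed.

Lemma uniq_cobeta_seq m : uniq [seq cobeta la N j | j <- iota 0 m].
Proof.
rewrite map_inj_in_uniq ?iota_uniq // => i k _ _ e.
by case: (ltngtP i k) => // h; have := cobeta_lt h; rewrite e ltnn.
Qed.

Lemma beta_or_cobeta z : z < beta_bound la N ->
  beta_set la N z \/ exists2 j, j < part la 0 & z = cobeta la N j.
Proof.
move=> zL.
set s := [seq beta la N i | i <- iota 0 N] ++ [seq cobeta la N j | j <- iota 0 (part la 0)].
have s_uniq : uniq s.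
  rewrite cat_uniq uniq_beta_seq uniq_cobeta_seq andbT /=.
  by apply/hasPn => y /mapP [j _ ->]; apply: cobeta_not_beta.
have s_sub : {subset s <= iota 0 (beta_bound la N)}.
  move=> y; rewrite mem_cat mem_iota add0n leq0n andTb => /orP [/beta_set_lt_bound //|].
  case/mapP=> j; rewrite mem_iota add0n leq0n => jl ->.
  by have := conj_part_le_N j; rewrite /cobeta /beta_bound; lia.
have s_size : size (iota 0 (beta_bound la N)) <= size s.
  by rewrite size_cat !size_map !size_iota.
have [_ s_eq] := uniq_min_size s_uniq s_sub s_size.
have : z \in s by rewrite s_eq mem_iota.
rewrite mem_cat => /orP [h|]; first by left.
by case/mapP=> j; rewrite mem_iota add0n leq0n => jl ->; right; exists j.
Qed.

Lemma sum_beta_set n (G : nat -> nat) : beta_bound la N <= n ->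
  \sum_(x < n) beta_set la N x * G x = \sum_(i < N) G (beta la N i).
Proof.
move=> Ln.
rewrite (eq_bigr (fun x : 'I_n => if beta_set la N x then G x else 0)); last first.
  by move=> x _; case: (beta_set _ _ _); rewrite ?mul1n ?mul0n.
rewrite -big_mkcond /= -(big_mkord (beta_set la N) G) /index_iota subn0 -big_filter.
rewrite -(big_mkord xpredT (fun i => G (beta la N i))) /index_iota subn0.
rewrite -(big_map (beta la N) xpredT G).
apply: perm_big; apply: uniq_perm; rewrite ?filter_uniq ?iota_uniq ?uniq_beta_seq //.
move=> z; rewrite mem_filter mem_iota add0n /=.
case bz: (beta_set la N z); last by move: bz; rewrite /beta_set => ->.
by rewrite (leq_trans (beta_set_lt_bound bz) Ln); move: bz; rewrite /beta_set => ->.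
Qed.

Lemma sum_cobeta_below i (F : nat -> nat) : i < N ->
  \sum_(y < beta la N i) (~~ beta_set la N y) * F y = \sum_(j < part la i) F (cobeta la N j).
Proof.
move=> iN.
rewrite (eq_bigr (fun y : 'I_(beta la N i) => if ~~ beta_set la N y then F y else 0)); last first.
  by move=> y _; case: (beta_set _ _ _); rewrite ?mul1n ?mul0n.
rewrite -big_mkcond /= -(big_mkord (fun y => ~~ beta_set la N y) F) /index_iota subn0.
rewrite -big_filter -(big_mkord xpredT (fun j => F (cobeta la N j))) /index_iota subn0.
rewrite -(big_map (cobeta la N) xpredT F); apply: perm_big; apply: uniq_perm.
- by rewrite filter_uniq ?iota_uniq.
- exact: uniq_cobeta_seq.
move=> z; rewrite mem_filter mem_iota add0n /=; apply/andP/mapP.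
- move=> [nbz zx].
  have zL : z < beta_bound la N by apply: leq_trans zx (ltnW (beta_lt_bound iN)).
  case: (beta_or_cobeta zL) => [bz|[j jl e]]; first by rewrite bz in nbz.
  by rewrite e in zx *; exists j => //; rewrite mem_iota add0n /= -(cobeta_lt_beta j iN).
- case=> j; rewrite mem_iota add0n /= => jl ->.
  by rewrite cobeta_not_beta cobeta_lt_beta.
Qed.

Lemma hook_beta i j : i < N -> j < part la i -> hook la i j = beta la N i - cobeta la N j.
Proof.
move=> iN jl; have := conj_part_gt la_sorted jl; have := conj_part_le_N j.
by rewrite /hook /beta /cobeta; lia.
Qed.

Lemma hook_lt_beta_bound i j : i < size la -> j < part la i -> hook la i j < beta_bound la N.
Proof.
move=> il jl; have iN : i < N by apply: leq_trans il la_N.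
by rewrite (hook_beta iN jl); apply: leq_ltn_trans (leq_subr _ _) (beta_lt_bound iN).
Qed.

Lemma sum_hooks_beta (F : nat -> nat) n : beta_bound la N <= n ->
  \sum_(i < size la) \sum_(j < part la i) F (hook la i j)
  = \sum_(x < n) \sum_(y < x) (beta_set la N x && ~~ beta_set la N y) * F (x - y).
Proof.
move=> Ln.
rewrite (eq_bigr (fun x : 'I_n =>
    beta_set la N x * \sum_(y < x) (~~ beta_set la N y) * F (x - y))); last first.
  move=> x _; rewrite big_distrr /=; apply: eq_bigr => y _.
  by case: (beta_set _ _ x); case: (beta_set _ _ y); rewrite /= ?mul1n ?mul0n.
rewrite (sum_beta_set (fun x => \sum_(y < x) (~~ beta_set la N y) * F (x - y)) Ln).
rewrite (eq_bigr (fun i : 'I_N =>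
    \sum_(j < part la i) F (beta la N i - cobeta la N j))); last first.
  by move=> i _; rewrite (sum_cobeta_below (fun y => F (beta la N i - y))).
rewrite (big_ord_widen N (fun i => \sum_(j < part la i) F (hook la i j)) la_N) big_mkcond /=.
apply: eq_bigr => i _; case: ifP => h.
- by apply: eq_bigr => j _; rewrite hook_beta.
- by rewrite part_default ?big_ord0 // leqNgt h.
Qed.

End BetaNumbers.

Lemma rm_domino_part_le la mu : rm_domino la mu -> forall k, part mu k <= part la k.
Proof.
case=> _ [[i [h1 h2]] | [i [h1 [h2 [h3 h4]]]]] k.
- by case: (eqVneq k i) => [->|ne]; [rewrite h1; lia | rewrite h2].
- case: (eqVneq k i) => [->|ne1]; first by rewrite h1; lia.
  case: (eqVneq k i.+1) => [->|ne2]; first by rewrite h2; lia.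
  by rewrite h4.
Qed.

Lemma size_le_of_part_le la mu : is_partition mu -> (forall k, part mu k <= part la k) ->
  size mu <= size la.
Proof.
move=> mu_part le_mu; case: (leqP (size mu) (size la)) => // h.
have := le_mu (size mu).-1; rewrite (part_default (la := la)); last by lia.
by have := part_pos mu_part (_ : (size mu).-1 < size mu); lia.
Qed.

(* Removing a horizontal domino lowers one beta-number by 2; removing a
   vertical one swaps two consecutive beta-numbers and lowers one by 2. *)
Lemma rm_domino_sum_beta la mu N (F : nat -> nat) : size la <= N ->
  (forall z, F z.+2 = F z) -> rm_domino la mu ->
  \sum_(i < N) F (beta mu N i) = \sum_(i < N) F (beta la N i).
Proof.
move=> la_N F2 [_ [[i [h1 h2]] | [i [h1 [h2 [h3 h4]]]]]].
  apply: eq_bigr => k _; rewrite /beta.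
  by case: (eqVneq (k : nat) i) => [->|ne]; [rewrite h1 !addSn F2 | rewrite h2].
have iN : i.+1 < N.
  case: (ltnP i.+1 (size la)) => [h|h]; first exact: leq_trans h la_N.
  by move: h2; rewrite part_default.
pose a : 'I_N := Ordinal (ltnW iN); pose b : 'I_N := Ordinal iN.
rewrite [RHS](reindex_inj (@perm_inj _ (tperm a b))) /=.
apply: eq_bigr => k _; rewrite /beta.
case: (tpermP a b k) => [-> | -> | ka kb]; rewrite /a /b.
- by rewrite h2 -h3 /=; congr F; lia.
- by rewrite h1 -h3 -F2 /=; congr F; lia.
- by rewrite h4 //; apply/eqP => e; [apply: ka | apply: kb]; apply: val_inj.
Qed.

Lemma rm_dominoes_invariants la mu : rm_dominoes la mu -> is_partition la ->
  [/\ is_partition mu, forall k, part mu k <= part la k &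
      forall N (F : nat -> nat), size la <= N -> (forall z, F z.+2 = F z) ->
        \sum_(i < N) F (beta mu N i) = \sum_(i < N) F (beta la N i)].
Proof.
elim=> [l|l m n step _ IH] l_part; first by split.
have m_part : is_partition m by case: step.
have le_m := rm_domino_part_le step.
have [n_part le_n sum_n] := IH m_part.
split => // [k|N F l_N F2]; first exact: leq_trans (le_n k) (le_m k).
rewrite sum_n //; first exact: rm_domino_sum_beta.
exact: leq_trans (size_le_of_part_le m_part le_m) l_N.
Qed.

Lemma partition_of_nonincr (f : nat -> nat) n : (forall k, f k.+1 <= f k) -> f n = 0 ->
  exists2 s, is_partition s & forall k, part s k = f k.
Proof.
have f_nonincr g : (forall k, g k.+1 <= g k) -> forall k, g k <= g 0.
  by move=> g_dec; elim=> // k IH; apply: leq_trans (g_dec k) IH.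
elim: n f => [|n IH] f f_dec fn.
  by exists [::] => // k; rewrite /part nth_nil; have := f_nonincr f f_dec k; lia.
have [s s_part s_f] := IH (fun k => f k.+1) (fun k => f_dec k.+1) fn.
case: (posnP (f 0)) => f0.
  by exists [::] => // k; rewrite /part nth_nil; have := f_nonincr f f_dec k; lia.
exists (f 0 :: s); last by case=> [|k] //; rewrite /part /= -s_f.
move: s_part; rewrite /is_partition /= f0 => /andP [s_sorted ->]; rewrite andbT.
case: s s_f s_sorted => [|y t] s_f //= ->.
by have := s_f 0; rewrite /part /= => ->; rewrite f_dec.
Qed.

Section NoDomino.
Variable mu : seq nat.
Hypotheses (mu_part : is_partition mu) (mu_core : ~ (exists nu, rm_domino mu nu)).

Let mu_sorted : sorted geq mu. Proof. by case/andP: mu_part. Qed.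
Let mu_dec k : part mu k.+1 <= part mu k. Proof. exact: part_nonincr. Qed.

Lemma core_part_step i : part mu i <= (part mu i.+1).+1.
Proof.
case: (leqP (part mu i) (part mu i.+1).+1) => // h; case: mu_core.
pose f k := if k == i then part mu i - 2 else part mu k.
have [nu nu_part nu_f] : exists2 nu, is_partition nu & forall k, part nu k = f k.
  apply: (@partition_of_nonincr f (size mu)) => [k|].
    rewrite /f; have := mu_dec k.
    by case: ifP => [/eqP e1 | _]; case: ifP => [/eqP e2 | _]; subst; lia.
  rewrite /f; case: eqP => [e|_]; last by rewrite part_default.
  by move: h; rewrite (@part_default mu i) ?e.
exists nu; split => //; left; exists i; rewrite nu_f /f eqxx; split; first lia.
by move=> k /negbTE ne; rewrite nu_f /f ne.
Qed.

Lemma vertical_domino_end n i :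
  size mu <= i + n -> part mu i = part mu i.+1 -> 0 < part mu i ->
  exists j, [/\ part mu j = part mu j.+1, 0 < part mu j & part mu j.+2 < part mu j.+1].
Proof.
elim: n i => [|n IH] i sz e pos; first by move: pos; rewrite part_default // -(addn0 i).
case: (ltnP (part mu i.+2) (part mu i.+1)) => h; first by exists i.
have e2 : part mu i.+2 = part mu i.+1 by apply/eqP; rewrite eqn_leq h mu_dec.
by apply: (IH i.+1); [rewrite addSnnS | rewrite e2 | rewrite -e].
Qed.

Lemma core_equal_parts0 i : part mu i = part mu i.+1 -> part mu i = 0.
Proof.
move=> e; case: (posnP (part mu i)) => // pos; case: mu_core.
have [j [ej posj lt]] := vertical_domino_end (leq_addl i (size mu)) e pos.
pose f k := if (k == j) || (k == j.+1) then (part mu k).-1 else part mu k.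
have [nu nu_part nu_f] : exists2 nu, is_partition nu & forall k, part nu k = f k.
  apply: (@partition_of_nonincr f (size mu)) => [k|].
    rewrite /f; have := mu_dec k.
    case: ifP => [/orP [] /eqP e1 | /negbT /norP [/eqP n1 /eqP n2]];
      case: ifP => [/orP [] /eqP e2 | /negbT /norP [/eqP n3 /eqP n4]]; subst; lia.
  rewrite /f part_default //; do 2 case: eqP => [e1|_] //=; subst;
    by move: posj; rewrite ?ej part_default //; lia.
have nu_j : part nu j = (part mu j).-1 by rewrite nu_f /f eqxx.
have nu_j1 : part nu j.+1 = (part mu j.+1).-1 by rewrite nu_f /f eqxx orbT.
exists nu; split => //; right; exists j; rewrite nu_j nu_j1 -ej.
split; [lia | split; [lia | split => // k /negbTE n1 /negbTE n2]].
by rewrite nu_f /f n1 n2.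
Qed.

(* A partition without removable dominoes is a staircase, so its
   beta-numbers are the first few even and the first few odd integers. *)
Lemma core_beta_sub2_closed N : size mu <= N -> sub2_closed (beta_set mu N).
Proof.
move=> mu_N z /beta_setP [i iN beta_i].
have step := core_part_step i; have dec := mu_dec i.
case: (eqVneq (part mu i) (part mu i.+1).+1) => e.
- have i1N : i.+1 < N.
    case: (ltnP i.+1 N) => // h; move: beta_i e.
    by rewrite /beta (part_default (leq_trans mu_N h)); lia.
  by apply/beta_setP; exists i.+1 => //; move: beta_i; rewrite /beta e; lia.
- have e0 : part mu i = 0 by apply: core_equal_parts0; lia.
  have e2 : part mu i.+2 = 0 by have := mu_dec i.+1; lia.
  by apply/beta_setP; exists i.+2; move: beta_i; rewrite /beta e0 ?e2; lia.
Qed.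

End NoDomino.

Lemma signed_count_beta_set la N n : sorted geq la -> size la <= N -> beta_bound la N <= n ->
  signed_count (beta_set la N) n
  = ((\sum_(i < N) ~~ odd (beta la N i))%:Z - (\sum_(i < N) odd (beta la N i))%:Z)%R.
Proof.
move=> S SN Ln.
rewrite -(sum_beta_set S SN (fun z => nat_of_bool (~~ odd z)) Ln).
rewrite -(sum_beta_set S SN (fun z => nat_of_bool (odd z)) Ln).
rewrite !(big_morph Posz PoszD (erefl (Posz 0))) -sumrB; apply: eq_bigr => z _.
by case: (beta_set _ _ _); rewrite /alt_sign; case: (odd _).
Qed.

Lemma rm_dominoes_signed_count la mu N L : is_partition la -> rm_dominoes la mu ->
  size la <= N -> beta_bound la N <= L ->
  signed_count (beta_set mu N) L = signed_count (beta_set la N) L.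
Proof.
move=> la_part la_mu la_N la_L.
have [mu_part le_mu sum_beta] := rm_dominoes_invariants la_mu la_part.
have mu_N : size mu <= N := leq_trans (size_le_of_part_le mu_part le_mu) la_N.
have mu_L : beta_bound mu N <= L by apply: leq_trans la_L; rewrite leq_add2l.
have [la_sorted mu_sorted] : sorted geq la /\ sorted geq mu.
  by case/andP: la_part; case/andP: mu_part.
have odd2 z : nat_of_bool (odd z.+2) = odd z by rewrite /= negbK.
have even2 z : nat_of_bool (~~ odd z.+2) = ~~ odd z by rewrite /= negbK.
by rewrite !signed_count_beta_set // (sum_beta N _ la_N odd2) (sum_beta N _ la_N even2).
Qed.

Lemma logn_prod p (I : Type) (r : seq I) (P : pred I) (F : I -> nat) :
  (forall i, P i -> 0 < F i) ->
  logn p (\prod_(i <- r | P i) F i) = \sum_(i <- r | P i) logn p (F i).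
Proof.
move=> F_gt0; elim: r => [|a r IH]; first by rewrite !big_nil logn1.
by rewrite !big_cons; case: ifP => Pa //; rewrite lognM ?IH ?F_gt0 // prodn_cond_gt0.
Qed.

Lemma logn_count_dvd p h B : prime p -> 0 < h -> h <= B ->
  logn p h = \sum_(k < B) (p ^ k.+1 %| h).
Proof.
move=> p_prime h_gt0 hB.
have lB : logn p h <= B by apply: leq_trans (ltnW (ltn_logl p h_gt0)) hB.
rewrite (eq_bigr (fun k : 'I_B => (k < logn p h) * 1)); last first.
  by move=> k _; rewrite pfactor_dvdn // muln1.
by rewrite -(sum_ord_widen_indicator (fun _ => 1) lB) sum1_card card_ord.
Qed.

Lemma hook_gt0 la i j : 0 < hook la i j.
Proof. by rewrite /hook addn1. Qed.

Lemma odd_hook_prod_gt0 la : 0 < odd_hook_prod la.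
Proof. by apply: prodn_cond_gt0 => i _; apply: prodn_cond_gt0 => j _; apply: hook_gt0. Qed.

Lemma logn2_odd_hook_prod la : logn 2 (odd_hook_prod la) = 0.
Proof.
rewrite logn_prod => [|i _]; last by apply: prodn_cond_gt0 => j _; apply: hook_gt0.
apply: big1 => i _; rewrite logn_prod => [|j _]; last exact: hook_gt0.
by apply: big1 => j odd_h; rewrite lognE dvdn2 odd_h !andbF.
Qed.

Lemma logn_odd_hook_prod la N n B p : is_partition la -> size la <= N ->
  beta_bound la N <= n -> beta_bound la N <= B -> prime p ->
  logn p (odd_hook_prod la) = \sum_(k < B) odd_gap_count (beta_set la N) n (p ^ k.+1).
Proof.
move=> la_part la_N la_n la_B p_prime; have S : sorted geq la by case/andP: la_part.
rewrite /odd_hook_prod logn_prod => [|i _]; last first.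
  by apply: prodn_cond_gt0 => j _; apply: hook_gt0.
pose G k d := odd d && (p ^ k.+1 %| d).
rewrite (eq_bigr (fun i : 'I_(size la) =>
    \sum_(j < part la i) \sum_(k < B) G k (hook la i j))); last first.
  move=> i _; rewrite logn_prod => [|j _]; last exact: hook_gt0.
  rewrite big_mkcond /=; apply: eq_bigr => j _.
  case: ifP => odd_h; last by rewrite big1 // => k _; rewrite /G odd_h.
  have h_B := leq_trans (hook_lt_beta_bound S la_N (ltn_ord i) (ltn_ord j)) la_B.
  rewrite (logn_count_dvd p_prime (hook_gt0 la i j) (ltnW h_B)).
  by apply: eq_bigr => k _; rewrite /G odd_h.
rewrite (eq_bigr (fun i : 'I_(size la) =>
    \sum_(k < B) \sum_(j < part la i) G k (hook la i j))); last by move=> i _; rewrite exchange_big.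
rewrite exchange_big /=; apply: eq_bigr => k _.
rewrite (sum_hooks_beta S la_N (G k) la_n); apply: eq_bigr => x _; apply: eq_bigr => y _.
by rewrite /G; case: (beta_set _ _ x); case: (beta_set _ _ y); case: (odd _); case: (_ %| _).
Qed.

Lemma hook_prod_sub2_closed mu N : is_partition mu -> size mu <= N ->
  sub2_closed (beta_set mu N) -> hook_prod mu = odd_hook_prod mu.
Proof.
move=> mu_part mu_N mu_closed; have S : sorted geq mu by case/andP: mu_part.
apply: eq_bigr => i _; rewrite [RHS]big_mkcond /=; apply: eq_bigr => j _.
have iN : i < N by apply: leq_trans (ltn_ord i) mu_N.
rewrite (hook_beta S mu_N iN (ltn_ord j)) (sub2_closed_odd_gap mu_closed) //.
- by apply/beta_setP; exists i.
- exact: cobeta_not_beta.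
- by rewrite cobeta_lt_beta.
Qed.

Theorem corollary3p4 (la mu : seq nat) :
  is_partition la -> two_core la mu -> hook_prod mu %| odd_hook_prod la.
Proof.
move=> la_part [la_mu mu_core].
have [mu_part le_mu _] := rm_dominoes_invariants la_mu la_part.
have [la_sorted mu_sorted] : sorted geq la /\ sorted geq mu.
  by case/andP: la_part; case/andP: mu_part.
set N := size la; set L := beta_bound la N.
have mu_N : size mu <= N := size_le_of_part_le mu_part le_mu.
have mu_L : beta_bound mu N <= L by rewrite leq_add2l.
have mu_closed := core_beta_sub2_closed mu_part mu_core mu_N.
rewrite (hook_prod_sub2_closed mu_part mu_N mu_closed).
apply/(dvdn_partP _ (odd_hook_prod_gt0 mu)) => p; rewrite mem_primes => /and3P [p_prime _ _].
rewrite p_part pfactor_dvdn ?odd_hook_prod_gt0 //.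
have [->|p_neq2] := eqVneq p 2; first by rewrite logn2_odd_hook_prod.
rewrite (logn_odd_hook_prod mu_part mu_N mu_L mu_L p_prime).
rewrite (logn_odd_hook_prod la_part (leqnn N) (leqnn L) (leqnn L) p_prime).
apply: leq_sum => k _; apply: (odd_gap_count_sub2_closed_le (L := L)) => // [|z|z|].
- rewrite oddX /=; apply/negPn/negP => /(prime_oddPn p_prime) p2.
  by rewrite p2 in p_neq2.
- exact: beta_set_ge_bound.
- by move=> Lz; apply: beta_set_ge_bound => //; apply: leq_trans Lz.
- by rewrite (rm_dominoes_signed_count la_part la_mu).
Qed.
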